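(* $(\mathcal{N},\sim^\omega_V)\models\forall\mathsf{x}\,\neg\forall\mathsf{y}[\neg\neg(\mathsf{x}=\mathsf{y})\rightarrow\mathsf{x}=\mathsf{y}]$; that is, for every $\gamma\in\mathcal{N}$ it is not the case that $\forall\alpha[\neg\neg(\alpha\sim^\omega_V\gamma)\rightarrow\alpha\sim^\omega_V\gamma]$.
   Context: Intuitionistic mathematics (constructive reading of logical constants; Markov's Principle not assumed), with Brouwer's Continuity Principle as an axiom (for every $R\subseteq\mathcal{N}\times\omega$, if $\forall\alpha\exists n[\alpha Rn]$ then $\forall\alpha\exists m\exists n\forall\beta[\overline{\alpha}m\sqsubset\beta\rightarrow\beta Rn]$, where $\overline{\alpha}m=\langle\alpha(0),\dots,\alpha(m-1)\rangle$ and $\sqsubset$ is ''initial segment of''). $\mathcal{N}=\omega^\omega$. Relations: $\alpha\sim^0_V\beta$ iff $\exists n\forall m>n[\alpha(m)=\beta(m)]$; $\alpha\sim^{i+1}_V\beta$ iff $\exists n\forall m>n[\alpha(m)\neq\beta(m)\rightarrow\alpha\sim^i_V\beta]$; $\alpha\sim^\omega_V\beta$ iff $\exists i[\alpha\sim^i_V\beta]$. In $(\mathcal{N},\sim^\omega_V)$ the symbol $=$ is interpreted by $\sim^\omega_V$; satisfaction read intuitionistically. *)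

Definition Baire := nat -> nat.

Definition prefix_of (alpha : Baire) (m : nat) (beta : Baire) : Prop :=
  forall k, k < m -> beta k = alpha k.

Definition BCP : Prop :=
  forall R : Baire -> nat -> Prop,
    (forall alpha, exists n, R alpha n) ->
    forall alpha, exists m, exists n,
      forall beta, prefix_of alpha m beta -> R beta n.

Fixpoint simV (i : nat) (alpha beta : Baire) : Prop :=
  match i with
  | 0 => exists n, forall m, m > n -> alpha m = beta m
  | S j => exists n, forall m, m > n -> alpha m <> beta m -> simV j alpha beta
  end.

Definition simVw (alpha beta : Baire) : Prop := exists i, simV i alpha beta.

(** Let [β_α] differ from [γ] exactly at the places where [α] reaches a new
    minimum of its nonzero values.  If [α] takes a nonzero value [v], all later
    new minima are below [v], which gives [β_α ~^v γ]; if [α] is zero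
    everywhere, [β_α = γ].  Hence [¬¬(β_α ~^ω γ)] for every [α].

    If [~^ω] were stable, every [α] would have a level [i] with [β_α ~^i γ], and
    by continuity one level [n] would work on a whole neighbourhood of the zero
    sequence.  But no level [j] works on any neighbourhood whose nonzero values
    exceed [j + 1]: appending the value [j + 1] far enough out creates a new
    minimum, hence a disagreement, beyond the bound witnessing level [j]; for
    [j = 0] this is already absurd, and otherwise it forces level [j - 1] on a
    smaller neighbourhood whose nonzero values exceed [j]. *)

From Stdlib Require Import Arith Lia Bool List.

Definition new_min (a : Baire) (m : nat) : bool :=
  negb (a m =? 0) && forallb (fun k => (a k =? 0) || (a m <? a k)) (seq 0 m).

Lemma new_minP (a : Baire) (m : nat) :
  new_min a m = true <-> a m <> 0 /\ forall k, k < m -> a k = 0 \/ a m < a k.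
Proof.
  unfold new_min.
  rewrite andb_true_iff, negb_true_iff, Nat.eqb_neq, forallb_forall.
  split; intros [Hm Hk]; split; auto; intros k Hlt.
  - assert (Hin : In k (seq 0 m)) by (apply in_seq; lia).
    specialize (Hk k Hin); apply orb_true_iff in Hk as [H | H].
    + left; apply Nat.eqb_eq, H.
    + right; apply Nat.ltb_lt, H.
  - apply in_seq in Hlt; apply orb_true_iff.
    destruct (Hk k ltac:(lia)) as [H | H].
    + left; apply Nat.eqb_eq, H.
    + right; apply Nat.ltb_lt, H.
Qed.

Definition perturb (g a : Baire) : Baire :=
  fun m => if new_min a m then S (g m) else g m.

Lemma perturb_neq (g a : Baire) (m : nat) : new_min a m = true -> perturb g a m <> g m.
Proof. unfold perturb; intros ->; lia. Qed.

Lemma new_min_of_perturb_neq (g a : Baire) (m : nat) :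
  perturb g a m <> g m -> new_min a m = true.
Proof. unfold perturb; destruct (new_min a m); auto. Qed.

Lemma simV_perturb_of_new_min_lt (g : Baire) (v : nat) :
  forall (q : nat) (a : Baire),
    (forall m, q < m -> new_min a m = true -> a m < v) -> simV v (perturb g a) g.
Proof.
  induction v as [| v IH]; intros q a Hlt; exists q; intros m Hm.
  - unfold perturb; destruct (new_min a m) eqn:E; auto.
    specialize (Hlt m Hm E); lia.
  - intros Hne; apply new_min_of_perturb_neq in Hne.
    pose proof (Hlt m Hm Hne) as Hv.
    apply (IH m); intros m' Hm' Hr.
    destruct (proj1 (new_minP a m') Hr) as [_ Hk].
    destruct (proj1 (new_minP a m) Hne) as [Hz _].
    destruct (Hk m Hm'); lia.
Qed.

Lemma not_not_simVw_perturb (g a : Baire) : ~ ~ simVw (perturb g a) g.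
Proof.
  intros N.
  assert (Hzero : forall k, a k = 0).
  { intros k; destruct (Nat.eq_dec (a k) 0) as [E | E]; auto; exfalso; apply N.
    exists (a k); apply (simV_perturb_of_new_min_lt g _ k); intros m Hm Hr.
    destruct (proj1 (new_minP a m) Hr) as [_ Hk].
    destruct (Hk k Hm); lia. }
  apply N; exists 0; apply (simV_perturb_of_new_min_lt g 0 0); intros m _ Hr.
  destruct (proj1 (new_minP a m) Hr) as [Hz _]; rewrite Hzero in Hz; lia.
Qed.

Lemma prefix_of_dec (p : Baire) (L : nat) (a : Baire) :
  prefix_of p L a \/ ~ prefix_of p L a.
Proof.
  induction L as [| L [H | H]].
  - left; intros k Hk; lia.
  - destruct (Nat.eq_dec (a L) (p L)) as [E | E].
    + left; intros k Hk; destruct (Nat.eq_dec k L); [subst; auto | apply H; lia].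
    + right; intros H'; apply E, H'; lia.
  - right; intros H'; apply H; intros k Hk; apply H'; lia.
Qed.

Lemma prefix_of_refl (p : Baire) (L : nat) : prefix_of p L p.
Proof. intros k _; reflexivity. Qed.

Lemma prefix_of_le (p : Baire) (m M : nat) (a : Baire) :
  m <= M -> prefix_of p M a -> prefix_of p m a.
Proof. intros Hle H k Hk; apply H; lia. Qed.

Lemma continuity_on_prefix (bcp : BCP) (P : Baire -> nat -> Prop) (p : Baire) (L : nat) :
  (forall a, prefix_of p L a -> exists n, P a n) ->
  exists m n, forall a, prefix_of p m a -> P a n.
Proof.
  intros HP.
  set (R a n := prefix_of p L a -> P a n).
  assert (Htot : forall a, exists n, R a n).
  { intros a; destruct (prefix_of_dec p L a) as [H | H].
    - destruct (HP a H) as [n Hn]; exists n; intros _; exact Hn.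
    - exists 0; intros H'; contradiction. }
  destruct (bcp R Htot p) as [m [n Hn]].
  exists (L + m), n; intros a Ha.
  apply Hn.
  - apply (prefix_of_le p m (L + m)); [lia | exact Ha].
  - apply (prefix_of_le p L (L + m)); [lia | exact Ha].
Qed.

Definition values_zero_or_above (v : nat) (p : Baire) : Prop :=
  forall k, p k = 0 \/ v < p k.

Definition graft (p : Baire) (M v : nat) : Baire :=
  fun k => if k <? M then p k else if k =? M then v else 0.

Lemma prefix_of_graft (p : Baire) (M v : nat) (a : Baire) :
  prefix_of (graft p M v) (S M) a -> prefix_of p M a /\ a M = v.
Proof.
  intros H; split.
  - intros k Hk; rewrite H by lia; unfold graft.
    replace (k <? M) with true by (symmetry; apply Nat.ltb_lt; lia); reflexivity.
  - rewrite H by lia; unfold graft; rewrite Nat.ltb_irrefl, Nat.eqb_refl; reflexivity.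
Qed.

Lemma values_zero_or_above_graft (w v : nat) (p : Baire) (M : nat) :
  values_zero_or_above v p -> w < v -> values_zero_or_above w (graft p M v).
Proof.
  intros Hp Hwv k; unfold graft.
  destruct (k <? M); [destruct (Hp k); lia |].
  destruct (k =? M); lia.
Qed.

Lemma new_min_at_graft (p : Baire) (M v : nat) (a : Baire) :
  values_zero_or_above v p -> v <> 0 ->
  prefix_of (graft p M v) (S M) a -> new_min a M = true.
Proof.
  intros Hp Hv Ha; destruct (prefix_of_graft p M v a Ha) as [Hpre HM].
  apply new_minP; rewrite HM; split; auto.
  intros k Hk; rewrite Hpre by exact Hk; apply Hp.
Qed.

Lemma not_simV_perturb_on_prefix (bcp : BCP) (g : Baire) (j : nat) :
  forall (p : Baire) (L : nat), values_zero_or_above (S j) p ->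
  ~ (forall a, prefix_of p L a -> simV j (perturb g a) g).
Proof.
  induction j as [| j IH]; intros p L Hp Hall;
    destruct (continuity_on_prefix bcp _ p L Hall) as [m [N HN]];
    set (M := m + S N).
  - set (a := graft p M 1).
    assert (Ha : prefix_of (graft p M 1) (S M) a) by apply prefix_of_refl.
    assert (Hnear : prefix_of p m a).
    { apply (prefix_of_le p m M); [unfold M; lia | apply (prefix_of_graft p M 1 a Ha)]. }
    apply (perturb_neq g a M (new_min_at_graft p M 1 a Hp ltac:(lia) Ha)).
    apply (HN a Hnear); unfold M; lia.
  - apply (IH (graft p M (S (S j))) (S M)).
    { apply values_zero_or_above_graft; auto. }
    intros a Ha.
    assert (Hnear : prefix_of p m a).
    { apply (prefix_of_le p m M); [unfold M; lia | apply (prefix_of_graft _ _ _ a Ha)]. }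
    apply (HN a Hnear M); [unfold M; lia |].
    apply perturb_neq, (new_min_at_graft p M (S (S j)) a Hp); auto.
Qed.

Theorem theorem10p3 :
  BCP ->
  forall gamma : Baire,
    ~ (forall alpha : Baire, ~ ~ simVw alpha gamma -> simVw alpha gamma).
Proof.
  intros bcp gamma Hstable.
  assert (Hlevel : forall a, exists n, simV n (perturb gamma a) gamma)
    by (intros a; exact (Hstable _ (not_not_simVw_perturb gamma a))).
  destruct (bcp _ Hlevel (fun _ => 0)) as [m [n Hn]].
  apply (not_simV_perturb_on_prefix bcp gamma n (fun _ => 0) m); [| exact Hn].
  intros k; left; reflexivity.
Qed.
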